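(* (1) For any $a,b\in\mathbb C$ with $|a|^2+|b|^2=1$, $a,b\neq0$, and any unit vectors $\ket{s_A},\ket{s_B}\in\mathbb C^2$, writing $p[\Pi(h)]=(\bra{s_A}\otimes\bra{s_B})\Pi(h)(\ket{s_A}\otimes\ket{s_B})$, $p[\Pi(\mathfrak H_{1W})]+p[\Pi(\mathfrak H_{4W})]+p[\Pi(\mathfrak H_{1X})]+p[\Pi(\mathfrak H_{4X})]+p[\Pi(\mathfrak H_{1Y})]+p[\Pi(\mathfrak H_{4Y})]+p[\Pi(\mathfrak H_{2Z})]+p[\Pi(\mathfrak H_{3Z})]\le 3.$ (2) For $a=b=1/\sqrt2$ there exists a unit vector $\ket s\in\mathbb C^2\otimes\mathbb C^2$ (necessarily of Schmidt rank two) such that $\bra s\big(\Pi(\mathfrak H_{1W})+\Pi(\mathfrak H_{4W})+\Pi(\mathfrak H_{1X})+\Pi(\mathfrak H_{4X})+\Pi(\mathfrak H_{1Y})+\Pi(\mathfrak H_{4Y})+\Pi(\mathfrak H_{2Z})+\Pi(\mathfrak H_{3Z})\big)\ket s>3$.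
   Context: In $\mathbb C^2$ let $\ket0=(0,1)^T$, $\ket1=(1,0)^T$, and let $U=\begin{pmatrix}a&b\\-\bar b&\bar a\end{pmatrix}$ with $|a|^2+|b|^2=1$, $a,b\neq0$; the same $U$ acts on both factors of $\mathbb C^2\otimes\mathbb C^2$. Define one-dimensional subspaces (span of the indicated vector): $\mathfrak H_{1W}=\langle\ket1\otimes\ket1\rangle$, $\mathfrak H_{4W}=\langle\ket0\otimes\ket0\rangle$; $\mathfrak H_{1X}=\langle\ket1\otimes U\ket1\rangle$, $\mathfrak H_{4X}=\langle\ket0\otimes U\ket0\rangle$; $\mathfrak H_{1Y}=\langle U\ket1\otimes\ket1\rangle$, $\mathfrak H_{4Y}=\langle U\ket0\otimes\ket0\rangle$; $\mathfrak H_{2Z}=\langle U\ket1\otimes U\ket0\rangle$, $\mathfrak H_{3Z}=\langle U\ket0\otimes U\ket1\rangle$. $\Pi(h)$ is the orthogonal projector onto $h$. The Schmidt rank of a vector in $\mathbb C^2\otimes\mathbb C^2$ is the least $n$ such that it is a sum of $n$ product vectors. *)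

(* Complex numbers: an arbitrary numClosedFieldType C
   (e.g. algC); vectors of C^2 are column vectors 'cV[C]_2, C^2 (x) C^2 = 'cV[C]_4. *)
From HB Require Import structures.
From mathcomp Require Import all_boot all_order all_algebra all_field.
Set Implicit Arguments. Unset Strict Implicit. Unset Printing Implicit Defensive.
Import Order.TTheory GRing.Theory Num.Theory.
Local Open Scope ring_scope.

Section Defs.
Variable C : numClosedFieldType.

Definition adj (m n : nat) (A : 'M[C]_(m, n)) : 'M[C]_(n, m) :=
  (map_mx (fun x => x^*) A)^T.

Definition braket (n : nat) (u v : 'cV[C]_n) : C := (adj u *m v) 0 0.

Definition is_unit_vec (n : nat) (v : 'cV[C]_n) : Prop := braket v v = 1.

(* Kronecker product of vectors: (u (x) v)_(2i+j) = u_i v_j *)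
Definition kron (u v : 'cV[C]_2) : 'cV[C]_4 :=
  \col_(k < 4) (u (inord (k %/ 2)) 0 * v (inord (k %% 2)) 0).

Definition proj (n : nat) (v : 'cV[C]_n) : 'M[C]_n :=
  (braket v v)^-1 *: (v *m adj v).

Definition expect (n : nat) (s : 'cV[C]_n) (P : 'M[C]_n) : C :=
  (adj s *m P *m s) 0 0.

(* |0> = (0,1)^T, |1> = (1,0)^T *)
Definition ket0 : 'cV[C]_2 := \col_(i < 2) (if i == 0 then 0 else 1).
Definition ket1 : 'cV[C]_2 := \col_(i < 2) (if i == 0 then 1 else 0).

Definition Umat (a b : C) : 'M[C]_2 :=
  \matrix_(i < 2, j < 2)
    (if i == 0 then (if j == 0 then a else b) else (if j == 0 then - b^* else a^*)).

Definition h1W : 'cV[C]_4 := kron ket1 ket1.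
Definition h4W : 'cV[C]_4 := kron ket0 ket0.
Definition h1X (a b : C) : 'cV[C]_4 := kron ket1 (Umat a b *m ket1).
Definition h4X (a b : C) : 'cV[C]_4 := kron ket0 (Umat a b *m ket0).
Definition h1Y (a b : C) : 'cV[C]_4 := kron (Umat a b *m ket1) ket1.
Definition h4Y (a b : C) : 'cV[C]_4 := kron (Umat a b *m ket0) ket0.
Definition h2Z (a b : C) : 'cV[C]_4 := kron (Umat a b *m ket1) (Umat a b *m ket0).
Definition h3Z (a b : C) : 'cV[C]_4 := kron (Umat a b *m ket0) (Umat a b *m ket1).

Definition Pi_total (a b : C) : 'M[C]_4 :=
  proj h1W + proj h4W + proj (h1X a b) + proj (h4X a b)
  + proj (h1Y a b) + proj (h4Y a b) + proj (h2Z a b) + proj (h3Z a b).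

Definition sum_of_products (s : 'cV[C]_4) (n : nat) : Prop :=
  exists (us vs : 'I_n -> 'cV[C]_2), s = \sum_(i < n) kron (us i) (vs i).

Definition schmidt_rank_is (s : 'cV[C]_4) (r : nat) : Prop :=
  sum_of_products s r /\ forall n, sum_of_products s n -> (r <= n)%N.

End Defs.

(* Part (1): for a product state each projector expectation factorises as
   |<f|s_A>|^2 |<g|s_B>|^2.  With t, r (resp. t', r') the weights of s_A (resp. s_B) on
   |1> and on U|1>, the sum becomes
   t t' + (1-t)(1-t') + t r' + (1-t)(1-r') + r t' + (1-r)(1-t') + r (1-r') + (1-r) r',
   and 3 minus this is twice a sum of products of the eight weights, a classical
   CHSH-type bound.
   Part (2): s = |1>(2/3, -1/3) + |0>(0, -2/3) has expectation 59/18 > 3 for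
   a = b = 1/sqrt 2, and its 2x2 coefficient matrix has nonzero determinant, so it is
   not a product vector. *)
From HB Require Import structures.
From mathcomp Require Import all_boot all_order all_algebra all_field.
From mathcomp Require Import ring.
Set Implicit Arguments. Unset Strict Implicit. Unset Printing Implicit Defensive.
Import Order.TTheory GRing.Theory Num.Theory.
Local Open Scope ring_scope.

Lemma two_basis_products_sum_le3 (R : numDomainType) (t T r Rr t' T' r' R' : R) :
  t + T = 1 -> r + Rr = 1 -> t' + T' = 1 -> r' + R' = 1 ->
  0 <= t -> 0 <= T -> 0 <= r -> 0 <= Rr ->
  0 <= t' -> 0 <= T' -> 0 <= r' -> 0 <= R' ->
  t * t' + T * T' + t * r' + T * R' + r * t' + Rr * T' + r * R' + Rr * r' <= 3.
Proof.
move=> tT rR tT' rR' *; rewrite -subr_ge0.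
have eT : T = 1 - t by rewrite -tT; ring.
have eR : Rr = 1 - r by rewrite -rR; ring.
have eT' : T' = 1 - t' by rewrite -tT'; ring.
have eR' : R' = 1 - r' by rewrite -rR'; ring.
have -> : 3 - (t * t' + T * T' + t * r' + T * R' + r * t' + Rr * T' + r * R' + Rr * r')
  = 2 * (t * r * T' * r' + t * r * T' * R' + t * Rr * t' * R' + t * Rr * T' * R'
       + T * r * t' * r' + T * r * T' * r' + T * Rr * t' * r' + T * Rr * t' * R').
  by rewrite eT eR eT' eR'; ring.
by rewrite mulr_ge0 // !addr_ge0 // !mulr_ge0.
Qed.

Section Braket.
Variable C : numClosedFieldType.

Lemma braketE n (u v : 'cV[C]_n) : braket u v = \sum_i (u i 0)^* * v i 0.
Proof. by rewrite /braket /adj mxE; apply: eq_bigr => i _; rewrite !mxE. Qed.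

Lemma sum_ord2 (F : 'I_2 -> C) : \sum_i F i = F 0 + F 1.
Proof. by rewrite big_ord_recr big_ord1; congr (F _ + F _); apply/val_inj. Qed.

Lemma braket2E (u v : 'cV[C]_2) :
  braket u v = (u 0 0)^* * v 0 0 + (u 1 0)^* * v 1 0.
Proof. by rewrite braketE sum_ord2. Qed.

Lemma mulmx2E (M : 'M[C]_2) (x : 'cV[C]_2) i :
  (M *m x) i 0 = M i 0 * x 0 0 + M i 1 * x 1 0.
Proof. by rewrite mxE sum_ord2. Qed.

Lemma braketDl n (u v w : 'cV[C]_n) : braket (v + w) u = braket v u + braket w u.
Proof.
by rewrite !braketE -big_split; apply: eq_bigr => i _; rewrite !mxE rmorphD mulrDl.
Qed.

Lemma braketDr n (u v w : 'cV[C]_n) : braket u (v + w) = braket u v + braket u w.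
Proof. by rewrite !braketE -big_split; apply: eq_bigr => i _; rewrite !mxE mulrDr. Qed.

Lemma braket_conj n (u v : 'cV[C]_n) : braket v u = (braket u v)^*.
Proof.
by rewrite !braketE rmorph_sum; apply: eq_bigr => i _; rewrite rmorphM /= conjCK mulrC.
Qed.

Lemma braket_kron (u v x y : 'cV[C]_2) :
  braket (kron u v) (kron x y) = braket u x * braket v y.
Proof.
rewrite braketE !braket2E !big_ord_recr big_ord0 /= !mxE.
have e0 : (inord 0 : 'I_2) = 0 by apply/val_inj; rewrite /= inordK.
have e1 : (inord 1 : 'I_2) = 1 by apply/val_inj; rewrite /= inordK.
by rewrite /= ?e0 ?e1 !rmorphM; ring.
Qed.

Lemma expect_proj n (s h : 'cV[C]_n) :
  expect s (proj h) = (braket h h)^-1 * (braket s h * braket h s).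
Proof.
rewrite /expect /proj -scalemxAr -scalemxAl mxE; congr (_ * _).
by rewrite !mulmxA -(mulmxA _ (adj h)) mxE big_ord1.
Qed.

Lemma expectDr n (s : 'cV[C]_n) (P Q : 'M[C]_n) :
  expect s (P + Q) = expect s P + expect s Q.
Proof. by rewrite /expect mulmxDr mulmxDl mxE. Qed.

Lemma expect_kron_proj_kron (x y f g : 'cV[C]_2) :
  is_unit_vec f -> is_unit_vec g ->
  expect (kron x y) (proj (kron f g)) = `|braket f x| ^+ 2 * `|braket g y| ^+ 2.
Proof.
move=> f1 g1; rewrite expect_proj !braket_kron f1 g1 mulr1 invr1 mul1r.
by rewrite (braket_conj f x) (braket_conj g y) !normCK; ring.
Qed.

End Braket.

Section UnitaryBasis.
Variables (C : numClosedFieldType) (a b : C).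
Hypothesis ab1 : a * a^* + b * b^* = 1.

Lemma Umat_ket1E :
  ((Umat a b *m ket1 C) 0 0 = a) * ((Umat a b *m ket1 C) 1 0 = - b^*).
Proof. by rewrite !mulmx2E !mxE /=; split; ring. Qed.

Lemma Umat_ket0E :
  ((Umat a b *m ket0 C) 0 0 = b) * ((Umat a b *m ket0 C) 1 0 = a^*).
Proof. by rewrite !mulmx2E !mxE /=; split; ring. Qed.

Lemma Umat_ket1_unit : is_unit_vec (Umat a b *m ket1 C).
Proof. by rewrite /is_unit_vec braket2E !Umat_ket1E rmorphN /= conjCK -ab1; ring. Qed.

Lemma Umat_ket0_unit : is_unit_vec (Umat a b *m ket0 C).
Proof. by rewrite /is_unit_vec braket2E !Umat_ket0E conjCK -ab1; ring. Qed.

Lemma Umat_basis_parseval (x : 'cV[C]_2) :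
  `|braket (Umat a b *m ket1 C) x| ^+ 2 + `|braket (Umat a b *m ket0 C) x| ^+ 2
  = braket x x.
Proof.
rewrite !braket2E !normCK !Umat_ket1E !Umat_ket0E -[RHS]mul1r -ab1.
by rewrite !(rmorphD, rmorphM, rmorphN) /= !conjCK; ring.
Qed.

End UnitaryBasis.

Lemma Umat10 (C : numClosedFieldType) : Umat (1 : C) 0 = 1%:M.
Proof.
apply/matrixP => -[[|[|//]] ?] [[|[|//]] ?]; rewrite !mxE /=.
all: by rewrite ?rmorph0 ?rmorph1 ?oppr0.
Qed.

Section KetBasis.
Variable C : numClosedFieldType.

Let id_ab1 : (1 : C) * 1^* + 0 * 0^* = 1.
Proof. by rewrite rmorph1 mulr1 mul0r addr0. Qed.

Lemma ket1_unit : is_unit_vec (ket1 C).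
Proof. by rewrite -[ket1 C]mul1mx -Umat10; exact: Umat_ket1_unit. Qed.

Lemma ket0_unit : is_unit_vec (ket0 C).
Proof. by rewrite -[ket0 C]mul1mx -Umat10; exact: Umat_ket0_unit. Qed.

Lemma ket_basis_parseval (x : 'cV[C]_2) :
  `|braket (ket1 C) x| ^+ 2 + `|braket (ket0 C) x| ^+ 2 = braket x x.
Proof. by rewrite -[ket1 C]mul1mx -[ket0 C]mul1mx -Umat10; exact: Umat_basis_parseval. Qed.

End KetBasis.

Lemma product_state_expect_le3 (C : numClosedFieldType) (a b : C) (sA sB : 'cV[C]_2) :
  a * a^* + b * b^* = 1 -> is_unit_vec sA -> is_unit_vec sB ->
  let p := fun h : 'cV[C]_4 => expect (kron sA sB) (proj h) in
  p (h1W C) + p (h4W C) + p (h1X a b) + p (h4X a b)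
  + p (h1Y a b) + p (h4Y a b) + p (h2Z a b) + p (h3Z a b) <= 3.
Proof.
move=> ab1 sA1 sB1 /=; rewrite /h1W /h4W /h1X /h4X /h1Y /h4Y /h2Z /h3Z.
have k1 := ket1_unit C; have k0 := ket0_unit C.
have u1 := Umat_ket1_unit ab1; have u0 := Umat_ket0_unit ab1.
rewrite !expect_kron_proj_kron //.
apply: two_basis_products_sum_le3; rewrite ?exprn_ge0 //.
all: by rewrite (ket_basis_parseval, Umat_basis_parseval ab1).
Qed.

Section Witness.
Variable C : numClosedFieldType.

(* the determinant of the coefficient matrix (s_(2i+j))_(i,j) *)
Definition coef_det (s : 'cV[C]_4) : C :=
  s (inord 0) 0 * s (inord 3) 0 - s (inord 1) 0 * s (inord 2) 0.

Lemma coef_det_kron (u v : 'cV[C]_2) : coef_det (kron u v) = 0.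
Proof. by rewrite /coef_det !mxE !inordK //; ring. Qed.

Lemma coef_det_0 : coef_det 0 = 0.
Proof. by rewrite /coef_det !mxE mul0r subrr. Qed.

Lemma sum_of_products_le1_coef_det (s : 'cV[C]_4) (n : nat) :
  (n <= 1)%N -> sum_of_products s n -> coef_det s = 0.
Proof.
case: n => [|[|//]] _ [us [vs ->]]; first by rewrite big_ord0 coef_det_0.
by rewrite big_ord1 coef_det_kron.
Qed.

Definition w1 : 'cV[C]_2 := \col_(i < 2) (if i == 0 then 2 / 3 else - (1 / 3)).
Definition w2 : 'cV[C]_2 := \col_(i < 2) (if i == 0 then 0 else - (2 / 3)).
Definition witness : 'cV[C]_4 := kron (ket1 C) w1 + kron (ket0 C) w2.

Lemma coef_det_witness : coef_det witness != 0.
Proof.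
have -> : coef_det witness = - (4 / 9).
  by rewrite /coef_det !mxE !inordK // -!val_eqE /= !inordK //=; field.
by rewrite oppr_eq0 mulf_eq0 invr_eq0 !pnatr_eq0.
Qed.

Lemma witness_schmidt_rank : schmidt_rank_is witness 2.
Proof.
split.
  exists (fun i => if i == 0 then ket1 C else ket0 C).
  exists (fun i => if i == 0 then w1 else w2).
  by rewrite big_ord_recr big_ord1.
move=> n sn; rewrite leqNgt; apply/negP => n_lt2.
by move/eqP: coef_det_witness; apply; exact: sum_of_products_le1_coef_det sn.
Qed.

Lemma braket_kron_witness (f g : 'cV[C]_2) : braket (kron f g) witness =
  braket f (ket1 C) * braket g w1 + braket f (ket0 C) * braket g w2.
Proof. by rewrite braketDr !braket_kron. Qed.

Lemma witness_unit : is_unit_vec witness.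
Proof.
rewrite /is_unit_vec {1}/witness braketDl !braket_kron_witness !braket2E !mxE /=.
by rewrite !(rmorphM, rmorphD, rmorphN, fmorphV, conjC_nat, rmorph0, rmorph1); field.
Qed.

Lemma witness_expect_gt3 (a : C) : a^* = a -> a * a = 2^-1 ->
  3 < expect witness (Pi_total a a).
Proof.
move=> a_real a2.
have ab1 : a * a^* + a * a^* = 1 by rewrite a_real a2; field.
rewrite /Pi_total !expectDr !expect_proj /h1W /h4W /h1X /h4X /h1Y /h4Y /h2Z /h3Z.
rewrite !braket_kron ket1_unit ket0_unit (Umat_ket1_unit ab1) (Umat_ket0_unit ab1).
rewrite !(mulr1, mul1r, invr1) !(braket_conj _ witness) !braket_kron_witness.
rewrite !braket2E !Umat_ket1E !Umat_ket0E !mxE /=.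
rewrite !(rmorphM, rmorphD, rmorphN, fmorphV, conjC_nat, rmorph0, rmorph1) /= ?conjCK a_real.
set X := (X in 3 < X).
have -> : X = 8 / 9 + (a * a) * (26 / 9) + (a * a) ^+ 2 * (34 / 9) by rewrite /X; field.
have -> : 8 / 9 + (a * a) * (26 / 9) + (a * a) ^+ 2 * (34 / 9) = 59 / 18 :> C.
  by rewrite a2; field.
by rewrite ltr_pdivlMr ?ltr0n // -natrM ltr_nat.
Qed.

End Witness.

Theorem mainTheorem8 (C : numClosedFieldType) :
  (forall (a b : C) (sA sB : 'cV[C]_2),
      `|a| ^+ 2 + `|b| ^+ 2 = 1 -> a != 0 -> b != 0 ->
      is_unit_vec sA -> is_unit_vec sB ->
      let p := fun h : 'cV[C]_4 => expect (kron sA sB) (proj h) in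
      p (h1W C) + p (h4W C) + p (h1X a b) + p (h4X a b)
      + p (h1Y a b) + p (h4Y a b) + p (h2Z a b) + p (h3Z a b) <= 3)
  /\
  (let a : C := (sqrtC 2)^-1 in
   exists s : 'cV[C]_4,
     is_unit_vec s /\ schmidt_rank_is s 2 /\ 3 < expect s (Pi_total a a)).
Proof.
split=> [a b sA sB|]; first by rewrite !normCK => ab1 _ _; apply: product_state_expect_le3.
exists (witness C); split; first exact: witness_unit.
split; first exact: witness_schmidt_rank.
apply: witness_expect_gt3; first by apply: geC0_conj; rewrite invr_ge0 sqrtC_ge0 ler0n.
by rewrite -invfM -expr2 sqrtCK.
Qed.
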